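(* There is a set $A\subseteq\mathbb{Z}$ such that (i) for every $n\in\mathbb{Z}$, $n\in A$ or $n+1\in A$ (or both), and (ii) $A\times A$ contains an infinite empty polygon, i.e., there is an infinite set $T\subseteq A\times A$ such that every point of $T$ is a vertex (extreme point) of $\mathrm{conv}(T)$ and $\mathrm{conv}(T)\cap(A\times A)=T$. *)

From Stdlib Require Import Reals ZArith List.
Open Scope R_scope.

Definition ptR (z : Z * Z) : R * R := (IZR (fst z), IZR (snd z)).

Definition conv (T : Z * Z -> Prop) (x : R * R) : Prop :=
  exists (n : nat) (p : nat -> Z * Z) (w : nat -> R),
    (forall i, (i <= n)%nat -> T (p i)) /\
    (forall i, (i <= n)%nat -> 0 <= w i) /\
    sum_f_R0 w n = 1 /\
    fst x = sum_f_R0 (fun i => w i * fst (ptR (p i))) n /\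
    snd x = sum_f_R0 (fun i => w i * snd (ptR (p i))) n.

Definition extreme_point (C : R * R -> Prop) (x : R * R) : Prop :=
  C x /\
  forall (y z : R * R) (t : R),
    C y -> C z -> 0 < t < 1 ->
    x = (t * fst y + (1 - t) * fst z, t * snd y + (1 - t) * snd z) ->
    y = z.

Definition infinite_set (T : Z * Z -> Prop) : Prop :=
  forall l : list (Z * Z), exists z, T z /\ ~ In z l.

(* Let T be the lattice points (q, p) with q >= 5 on the hyperbola
   2 x^2 - y^2 = 1, i.e. (5, 7), (29, 41), (169, 239), ..., and let A be the
   set of columns n such that every lattice point of conv T with abscissa n
   lies in T.  The tangent 2 q x - p y = 1 at (q, p) meets no other lattice
   point of the branch, because (2 q x - p y)^2 = 1 + 2 (q y - p x)^2; hence
   every point of T is exposed.  Since p - sqrt 2 q = -1 / (p + sqrt 2 q),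
   conv T lies in the strip 7 - 5 sqrt 2 <= y - sqrt 2 x <= 0, which is so thin
   that it contains at most one lattice point per column, none in two adjacent
   columns, and none in column p for (q, p) in T, as sqrt 2 p lies just below
   the integer 2 q.  So A contains both coordinates of every point of T and one
   of any two consecutive integers. *)
From Stdlib Require Import Reals ZArith List.
From Stdlib Require Import Lra Lia Psatz Classical.
Open Scope R_scope.

Definition lin (a b : R) (x : R * R) : R := a * fst x + b * snd x.

Lemma sum_f_R0_affine (w X Y : nat -> R) (a b c : R) (n : nat) :
  sum_f_R0 (fun i => w i * (a * X i + b * Y i - c)) n =
  a * sum_f_R0 (fun i => w i * X i) n + b * sum_f_R0 (fun i => w i * Y i) n
  - c * sum_f_R0 w n.
Proof. induction n as [|n IH]; simpl; [|rewrite IH]; ring. Qed.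

Lemma sum_f_R0_ge0 (h : nat -> R) (n : nat) :
  (forall i, (i <= n)%nat -> 0 <= h i) -> 0 <= sum_f_R0 h n.
Proof.
  induction n as [|n IH]; intros H; simpl.
  - apply H; lia.
  - assert (0 <= h (S n)) by (apply H; lia).
    assert (0 <= sum_f_R0 h n) by (apply IH; intros; apply H; lia).
    lra.
Qed.

Lemma sum_f_R0_eq0 (h : nat -> R) (n : nat) :
  (forall i, (i <= n)%nat -> 0 <= h i) -> sum_f_R0 h n = 0 ->
  forall i, (i <= n)%nat -> h i = 0.
Proof.
  induction n as [|n IH]; intros H Hsum i Hi; simpl in Hsum.
  - replace i with 0%nat by lia. exact Hsum.
  - assert (0 <= h (S n)) by (apply H; lia).
    assert (0 <= sum_f_R0 h n) by (apply sum_f_R0_ge0; intros; apply H; lia).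
    destruct (Nat.eq_dec i (S n)) as [->|Hne]; [lra|].
    apply IH; [intros; apply H; lia | lra | lia].
Qed.

Section ConvexHull.

Variable T : Z * Z -> Prop.

Lemma conv_of_mem (t : Z * Z) : T t -> conv T (ptR t).
Proof.
  intros Ht. exists 0%nat, (fun _ => t), (fun _ => 1).
  repeat split; simpl; intros; try lra; try ring; assumption.
Qed.

Lemma conv_lin_sub (x : R * R) : conv T x ->
  exists n (p : nat -> Z * Z) (w : nat -> R),
    (forall i, (i <= n)%nat -> T (p i) /\ 0 <= w i) /\
    forall a b c, lin a b x - c = sum_f_R0 (fun i => w i * (lin a b (ptR (p i)) - c)) n.
Proof.
  intros (n & p & w & Hp & Hw & Hs & Hx1 & Hx2).
  exists n, p, w. split; [intros i Hi; split; auto|].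
  intros a b c. unfold lin. rewrite sum_f_R0_affine, Hs, <- Hx1, <- Hx2. ring.
Qed.

Lemma conv_ge (a b c : R) :
  (forall t, T t -> c <= lin a b (ptR t)) ->
  forall x, conv T x -> c <= lin a b x.
Proof.
  intros Hge x Hx. destruct (conv_lin_sub x Hx) as (n & p & w & Hpw & Hsum).
  enough (0 <= lin a b x - c) by lra.
  rewrite Hsum. apply sum_f_R0_ge0. intros i Hi.
  destruct (Hpw i Hi) as [Hp Hw]. specialize (Hge _ Hp). nra.
Qed.

Section ExposedPoint.

Variables (a b c : R) (t0 : Z * Z).
Hypothesis supporting : forall t, T t -> c <= lin a b (ptR t).
Hypothesis touches_once : forall t, T t -> lin a b (ptR t) = c -> t = t0.

Lemma conv_face (x : R * R) : conv T x -> lin a b x = c -> x = ptR t0.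
Proof.
  intros Hx Hxc. destruct (conv_lin_sub x Hx) as (n & p & w & Hpw & Hsum).
  assert (Hzero : forall i, (i <= n)%nat -> w i * (lin a b (ptR (p i)) - c) = 0).
  { apply sum_f_R0_eq0; [|rewrite <- Hsum; lra].
    intros i Hi. destruct (Hpw i Hi) as [Hp Hw]. specialize (supporting _ Hp). nra. }
  assert (Hon : forall a' b' i, (i <= n)%nat ->
            w i * (lin a' b' (ptR (p i)) - lin a' b' (ptR t0)) = 0).
  { intros a' b' i Hi. destruct (Hpw i Hi) as [Hp _].
    destruct (Req_dec (lin a b (ptR (p i))) c) as [Heq|Hne].
    - rewrite (touches_once _ Hp Heq). ring.
    - specialize (Hzero i Hi).
      assert (Hw0 : w i = 0) by (apply (Rmult_eq_reg_r (lin a b (ptR (p i)) - c)); lra).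
      rewrite Hw0. ring. }
  destruct x as [x1 x2].
  pose proof (Hsum 1 0 (lin 1 0 (ptR t0))) as H1.
  pose proof (Hsum 0 1 (lin 0 1 (ptR t0))) as H2.
  rewrite sum_eq_R0 in H1 by (intros; apply Hon; assumption).
  rewrite sum_eq_R0 in H2 by (intros; apply Hon; assumption).
  unfold lin, ptR in H1, H2 |- *; simpl in H1, H2 |- *.
  f_equal; lra.
Qed.

Lemma extreme_of_exposed : T t0 -> lin a b (ptR t0) = c ->
  extreme_point (conv T) (ptR t0).
Proof.
  intros Ht0 Hc. split; [apply conv_of_mem; exact Ht0|].
  intros y z s Hy Hz Hs Hyz.
  pose proof (conv_ge a b c supporting y Hy) as Hyc.
  pose proof (conv_ge a b c supporting z Hz) as Hzc.
  assert (Hmix : s * lin a b y + (1 - s) * lin a b z = c).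
  { rewrite <- Hc, Hyz. unfold lin; simpl. ring. }
  assert (lin a b y = c) by nra.
  assert (lin a b z = c) by nra.
  rewrite (conv_face y), (conv_face z); auto.
Qed.

End ExposedPoint.

End ConvexHull.

Lemma infinite_set_of_unbounded (T : Z * Z -> Prop) :
  (forall N : Z, exists z, T z /\ (N <= fst z)%Z) -> infinite_set T.
Proof.
  intros Hunb l.
  assert (Hbound : exists N, forall z, In z l -> (fst z < N)%Z).
  { induction l as [|z0 l [N HN]].
    - exists 0%Z. intros z [].
    - exists (Z.max N (fst z0 + 1)). intros z [<-|Hz]; [lia|]. specialize (HN z Hz). lia. }
  destruct Hbound as [N HN]. destruct (Hunb N) as (z & Hz & HNz).
  exists z. split; [exact Hz|]. intros Hin. specialize (HN z Hin). lia.
Qed.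

Lemma hyperbola_tangent_gap (q p x y : Z) :
  (0 <= q)%Z -> (0 <= x)%Z ->
  (2 * q * q - p * p = 1)%Z -> (2 * x * x - y * y = 1)%Z ->
  (1 <= 2 * q * x - p * y)%Z /\ (2 * q * x - p * y = 1 -> x = q /\ y = p)%Z.
Proof.
  intros Hq Hx Hqp Hxy.
  assert (Hsq : ((2*q*x - p*y) * (2*q*x - p*y) = 1 + 2 * (q*y - p*x) * (q*y - p*x))%Z).
  { transitivity ((2*q*q - p*p) * (2*x*x - y*y) + 2 * (q*y - p*x) * (q*y - p*x))%Z;
      [ring | rewrite Hqp, Hxy; ring]. }
  assert (Hpos : (p * y < 2 * q * x)%Z).
  { assert ((p*y) * (p*y) < (2*q*x) * (2*q*x))%Z by nia. nia. }
  split; [nia|].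
  intros Hone. rewrite Hone in Hsq.
  assert (Hcol : (q * y = p * x)%Z) by nia.
  assert (x = q) by nia. subst x. split; [reflexivity | nia].
Qed.

Definition pell_point (z : Z * Z) : Prop :=
  (5 <= fst z)%Z /\ (1 <= snd z)%Z /\ (2 * fst z * fst z - snd z * snd z = 1)%Z.

Lemma lin_tangent (q p x y : Z) :
  lin (2 * IZR q) (- IZR p) (ptR (x, y)) = IZR (2 * q * x - p * y).
Proof. unfold lin, ptR; cbn [fst snd]. rewrite minus_IZR, !mult_IZR. ring. Qed.

Lemma pell_extreme (q p : Z) : pell_point (q, p) ->
  extreme_point (conv pell_point) (ptR (q, p)).
Proof.
  intros Hqp.
  assert (Hgap : forall t, pell_point t ->
            (1 <= 2 * q * fst t - p * snd t)%Z /\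
            (2 * q * fst t - p * snd t = 1 -> t = (q, p))%Z).
  { intros [x y] (Hx & _ & Hxy). destruct Hqp as (Hq & _ & Hqp'). cbn [fst snd] in *.
    destruct (hyperbola_tangent_gap q p x y) as [Hge Heq]; try lia.
    split; [exact Hge|]. intros H1. destruct (Heq H1) as [-> ->]. reflexivity. }
  apply (extreme_of_exposed _ (2 * IZR q) (- IZR p) 1); [| |exact Hqp|].
  - intros [x y] Ht. rewrite lin_tangent. apply IZR_le, (Hgap _ Ht).
  - intros [x y] Ht. rewrite lin_tangent. intros H1. apply eq_IZR in H1.
    exact (proj2 (Hgap _ Ht) H1).
  - destruct Hqp as (_ & _ & Hqp). cbn [fst snd] in Hqp.
    rewrite lin_tangent, Hqp. reflexivity.
Qed.

Lemma pell_step (q p : Z) : pell_point (q, p) -> pell_point (3 * q + 2 * p, 4 * q + 3 * p)%Z.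
Proof. unfold pell_point; cbn [fst snd]. nia. Qed.

Lemma pell_unbounded (N : Z) : exists z, pell_point z /\ (N <= fst z)%Z.
Proof.
  assert (Hnat : forall k : nat, exists z, pell_point z /\ (Z.of_nat k <= fst z)%Z).
  { induction k as [|k ([q p] & Hz & Hk)].
    - exists (5, 7)%Z. unfold pell_point; cbn [fst snd]. lia.
    - exists (3 * q + 2 * p, 4 * q + 3 * p)%Z. split; [apply pell_step; exact Hz|].
      destruct Hz as (_ & Hp & _). cbn [fst snd] in *. lia. }
  destruct (Hnat (Z.to_nat N)) as (z & Hz & HN). exists z. split; [exact Hz | lia].
Qed.

Lemma sqrt2_bounds : sqrt 2 * sqrt 2 = 2 /\ 141421 / 100000 < sqrt 2 < 141422 / 100000.
Proof.
  pose proof (sqrt_pos 2) as Hpos.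
  assert (H : sqrt 2 * sqrt 2 = 2) by (apply sqrt_sqrt; lra).
  repeat split; [exact H | nra | nra].
Qed.

(* y - sqrt 2 x at (5, 7), where it is least among the points of pell_point. *)
Definition strip_bottom : R := 7 - 5 * sqrt 2.

Definition in_strip (x : R * R) : Prop := strip_bottom <= snd x - sqrt 2 * fst x <= 0.

Lemma pell_strictly_in_strip (q p : Z) : pell_point (q, p) ->
  strip_bottom <= IZR p - sqrt 2 * IZR q < 0.
Proof.
  unfold pell_point; cbn [fst snd]. intros (Hq & Hp & Hqp).
  assert (Hp7 : (7 <= p)%Z) by nia.
  apply IZR_le in Hq, Hp7. apply (f_equal IZR) in Hqp. rewrite minus_IZR, !mult_IZR in Hqp.
  destruct sqrt2_bounds as [Hsq Hs]. unfold strip_bottom.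
  set (d := IZR p - sqrt 2 * IZR q). set (D := IZR p + sqrt 2 * IZR q).
  assert (HdD : d * D = -1) by (unfold d, D; nra).
  assert (HD : 7 + 5 * sqrt 2 <= D) by (unfold D; nra).
  assert (Hbottom : (7 - 5 * sqrt 2) * (7 + 5 * sqrt 2) = -1) by nra.
  split; nra.
Qed.

Lemma conv_pell_in_strip (x : R * R) : conv pell_point x -> in_strip x.
Proof.
  intros Hx. unfold in_strip. split.
  - enough (strip_bottom <= lin (- sqrt 2) 1 x) by (unfold lin in *; lra).
    apply (conv_ge pell_point); [|exact Hx].
    intros [q p] Ht. destruct (pell_strictly_in_strip q p Ht).
    unfold lin, ptR; cbn [fst snd]. lra.
  - enough (0 <= lin (sqrt 2) (-1) x) by (unfold lin in *; lra).
    apply (conv_ge pell_point); [|exact Hx].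
    intros [q p] Ht. destruct (pell_strictly_in_strip q p Ht).
    unfold lin, ptR; cbn [fst snd]. lra.
Qed.

Lemma no_IZR_strictly_between (k a : Z) : IZR a < IZR k < IZR a + 1 -> False.
Proof.
  intros [H1 H2]. rewrite <- plus_IZR in H2. apply lt_IZR in H1, H2. lia.
Qed.

Lemma strip_column_unique (n m m' : Z) :
  in_strip (ptR (n, m)) -> in_strip (ptR (n, m')) -> m = m'.
Proof.
  unfold in_strip, ptR, strip_bottom; cbn [fst snd]. intros H H'.
  destruct sqrt2_bounds as [_ Hs].
  enough ((m - m')%Z = 0%Z) by lia.
  apply one_IZR_lt1. rewrite minus_IZR. lra.
Qed.

Lemma strip_adjacent_columns (n m m' : Z) :
  in_strip (ptR (n, m)) -> ~ in_strip (ptR ((n + 1)%Z, m')).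
Proof.
  unfold in_strip, ptR, strip_bottom; cbn [fst snd]. intros H H'.
  rewrite plus_IZR in H'. destruct sqrt2_bounds as [_ Hs].
  apply (no_IZR_strictly_between m' (m + 1)). rewrite plus_IZR. lra.
Qed.

Lemma strip_column_empty (q p m : Z) :
  in_strip (ptR (q, p)) -> IZR p < sqrt 2 * IZR q -> ~ in_strip (ptR (p, m)).
Proof.
  unfold in_strip, ptR, strip_bottom; cbn [fst snd]. intros H Hlt H'.
  destruct sqrt2_bounds as [Hsq Hs].
  assert (Hp : sqrt 2 * IZR p = 2 * IZR q + sqrt 2 * (IZR p - sqrt 2 * IZR q)).
  { replace (2 * IZR q) with (sqrt 2 * sqrt 2 * IZR q) by (rewrite Hsq; ring). ring. }
  apply (no_IZR_strictly_between m (2 * q - 1)).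
  rewrite minus_IZR, mult_IZR. nra.
Qed.

Definition column_closed (T : Z * Z -> Prop) (n : Z) : Prop :=
  forall m, conv T (ptR (n, m)) -> T (n, m).

Lemma column_closed_pell_fst (q p : Z) : pell_point (q, p) -> column_closed pell_point q.
Proof.
  intros Ht m Hm.
  destruct (pell_strictly_in_strip q p Ht) as [Hb Hlt].
  assert (Hqp : in_strip (ptR (q, p))) by (unfold in_strip, ptR; cbn [fst snd]; lra).
  rewrite <- (strip_column_unique q p m Hqp (conv_pell_in_strip _ Hm)). exact Ht.
Qed.

Lemma column_closed_pell_snd (q p : Z) : pell_point (q, p) -> column_closed pell_point p.
Proof.
  intros Ht m Hm. exfalso.
  destruct (pell_strictly_in_strip q p Ht) as [Hb Hlt].
  apply (strip_column_empty q p m); [unfold in_strip, ptR; cbn [fst snd]; lra | lra |].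
  exact (conv_pell_in_strip _ Hm).
Qed.

Lemma column_closed_pell_adjacent (n : Z) :
  column_closed pell_point n \/ column_closed pell_point (n + 1).
Proof.
  destruct (classic (exists m, conv pell_point (ptR (n, m)))) as [[m Hm]|Hnone].
  - right. intros m' Hm'. exfalso.
    exact (strip_adjacent_columns n m m' (conv_pell_in_strip _ Hm) (conv_pell_in_strip _ Hm')).
  - left. intros m Hm. exfalso. exact (Hnone (ex_intro _ m Hm)).
Qed.

Theorem proposition9 :
  exists A : Z -> Prop,
    (forall n : Z, A n \/ A (n + 1)%Z) /\
    exists T : Z * Z -> Prop,
      (forall z, T z -> A (fst z) /\ A (snd z)) /\
      infinite_set T /\
      (forall z, T z -> extreme_point (conv T) (ptR z)) /\
      (forall z, (conv T (ptR z) /\ A (fst z) /\ A (snd z)) <-> T z).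
Proof.
  exists (column_closed pell_point). split; [exact column_closed_pell_adjacent|].
  exists pell_point. split; [|split; [|split]].
  - intros [q p] Ht.
    split; [exact (column_closed_pell_fst q p Ht) | exact (column_closed_pell_snd q p Ht)].
  - apply infinite_set_of_unbounded, pell_unbounded.
  - intros [q p]. apply pell_extreme.
  - intros [q p]. split.
    + intros (Hc & Hq & _). exact (Hq p Hc).
    + intros Ht. split; [exact (conv_of_mem _ _ Ht)|].
      split; [exact (column_closed_pell_fst q p Ht) | exact (column_closed_pell_snd q p Ht)].
Qed.
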